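(* Let $\mathbf{X}\in\mathbb{R}^{n\times d}$ with rows $\mathbf{X}_1,\ldots,\mathbf{X}_n$ and columns $\mathbf{X}_{\cdot 1},\ldots,\mathbf{X}_{\cdot d}$, let $u$ be a utility function, $\lambda>0$, and let $$\mathcal{P}_\lambda(\mathbf{w})=-\frac1n\sum_{j=1}^n u(\mathbf{w}^{\top}\mathbf{X}_j)+\lambda\|\mathbf{w}\|_1,\qquad\mathcal{D}_\lambda(\boldsymbol{\theta})=\frac1n\sum_{j=1}^n u^*(n\lambda\theta_j),$$ with feasible sets $\mathcal{C}_P=\mathrm{dom}(\mathcal{P}_\lambda)\cap\mathbb{R}^d_+$ and $\mathcal{C}_D=\mathrm{dom}(\mathcal{D}_\lambda)\cap\{\boldsymbol{\theta}:\|\phi(\mathbf{X}^{\top}\boldsymbol{\theta})\|_\infty\leq1\}$; let $\mathbf{w}^*$ minimize $\mathcal{P}_\lambda$ over $\mathcal{C}_P$ and $\boldsymbol{\theta}^*$ maximize $\mathcal{D}_\lambda$ over $\mathcal{C}_D$. Suppose $\mathcal{D}_\lambda$ is $\alpha$-strongly concave. Then for any $(\mathbf{w},\boldsymbol{\theta})\in\mathcal{C}_P\times\mathcal{C}_D$, $\boldsymbol{\theta}^*\in\mathcal{B}(\boldsymbol{\theta},r)$ with $r=\sqrt{2\,\mathrm{Gap}_\lambda(\mathbf{w},\boldsymbol{\theta})/\alpha}$. Furthermore, for each $j\in[d]$: if $\phi(\mathbf{X}_{\cdot j}^{\top}\boldsymbol{\theta})+r\|\mathbf{X}_{\cdot j}\|_2<1$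 then $w_j^*=0$.
   Context: A utility function is an increasing concave function $u$; $u^*(\theta)=\inf_z\{\theta z-u(z)\}$ is its conjugate as used in the Fenchel–Rockafellar dual of $\min_{\mathbf{w}\geq0}\mathcal{P}_\lambda(\mathbf{w})$. $\phi(x)=\max\{x,0\}$ entrywise; $\mathrm{Gap}_\lambda(\mathbf{w},\boldsymbol{\theta})=\mathcal{P}_\lambda(\mathbf{w})-\mathcal{D}_\lambda(\boldsymbol{\theta})$; $\mathcal{B}(\boldsymbol{\theta},r)$ is the closed Euclidean ball of radius $r$ centered at $\boldsymbol{\theta}$. *)

From HB Require Import structures.
From mathcomp Require Import all_boot all_order all_algebra.
From mathcomp Require Import all_classical all_reals all_analysis.
Set Implicit Arguments. Unset Strict Implicit. Unset Printing Implicit Defensive.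
Import Order.TTheory GRing.Theory Num.Theory.
Local Open Scope classical_set_scope.
Local Open Scope ring_scope.

Section Defs.
Variable R : realType.

Definition phi (x : R) : R := Num.max x 0.

Definition l1norm (m : nat) (v : 'I_m -> R) : R := \sum_(i < m) `|v i|.
Definition l2norm (m : nat) (v : 'I_m -> R) : R := Num.sqrt (\sum_(i < m) v i ^+ 2).
Definition linfnorm (m : nat) (v : 'I_m -> R) : R := \big[Num.max/0]_(i < m) `|v i|.

Definition cball (m : nat) (c : 'I_m -> R) (r : R) : set ('I_m -> R) :=
  [set x | l2norm (fun i => x i - c i) <= r].

Definition rowdot (n d : nat) (X : 'M[R]_(n, d)) (w : 'I_d -> R) (j : 'I_n) : R :=
  \sum_(i < d) X j i * w i.
Definition coldot (n d : nat) (X : 'M[R]_(n, d)) (th : 'I_n -> R) (i : 'I_d) : R :=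
  \sum_(j < n) X j i * th j.
Definition colnorm (n d : nat) (X : 'M[R]_(n, d)) (i : 'I_d) : R :=
  l2norm (fun j => X j i).

Definition utility (u : R -> \bar R) : Prop :=
  [/\ (forall z, (u z < +oo)%E),
      (exists z, (-oo < u z)%E),
      (forall x y, x <= y -> (u x <= u y)%E) &
      (forall x y (t : R), (0 < t < 1)%R ->
         (t%:E * u x + (1 - t)%R%:E * u y <= u (t * x + (1 - t) * y)%R)%E)].

Definition uconj (u : R -> \bar R) (t : R) : \bar R :=
  ereal_inf (range (fun z : R => ((t * z)%:E - u z)%E)).

Definition Pprimal (n d : nat) (X : 'M[R]_(n, d)) (u : R -> \bar R) (lam : R)
    (w : 'I_d -> R) : \bar R :=
  (- ((n%:R)^-1)%:E * (\sum_(j < n) u (rowdot X w j)) + (lam * l1norm w)%:E)%E.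

Definition Ddual (n : nat) (u : R -> \bar R) (lam : R) (th : 'I_n -> R) : \bar R :=
  ((n%:R)^-1)%:E * (\sum_(j < n) uconj u (n%:R * lam * th j))%E.

Definition CP (n d : nat) (X : 'M[R]_(n, d)) (u : R -> \bar R) (lam : R) :
    set ('I_d -> R) :=
  [set w | (Pprimal X u lam w < +oo)%E /\ forall i, 0 <= w i].

Definition CD (n d : nat) (X : 'M[R]_(n, d)) (u : R -> \bar R) (lam : R) :
    set ('I_n -> R) :=
  [set th | (-oo < Ddual u lam th)%E /\ linfnorm (fun i => phi (coldot X th i)) <= 1].

Definition Gap (n d : nat) (X : 'M[R]_(n, d)) (u : R -> \bar R) (lam : R)
    (w : 'I_d -> R) (th : 'I_n -> R) : \bar R :=
  (Pprimal X u lam w - Ddual u lam th)%E.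

Definition strongly_concave (m : nat) (alpha : R) (F : ('I_m -> R) -> \bar R) : Prop :=
  0 < alpha /\
  forall x y (t : R), (0 < t < 1)%R ->
    (t%:E * F x + (1 - t)%R%:E * F y
      + (alpha / 2 * t * (1 - t) * (l2norm (fun i => (x i - y i)%R)) ^+ 2)%R%:E
     <= F (fun i => (t * x i + (1 - t) * y i)%R))%E.

End Defs.

From mathcomp Require Import all_boot all_order all_algebra.
From mathcomp Require Import all_classical all_reals all_analysis.
From mathcomp Require Import ring lra.
Set Implicit Arguments. Unset Strict Implicit. Unset Printing Implicit Defensive.
Import Order.TTheory GRing.Theory Num.Theory.
Local Open Scope classical_set_scope.
Local Open Scope ring_scope.

(* Strong concavity of D and maximality of thstar along the segment from th
   give alpha/2 |thstar - th|^2 <= D(thstar) - D(th), and weak duality bounds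
   D(thstar) by P(w); this is the ball.  For screening, strong concavity of D
   makes u^* strongly concave with modulus alpha / (n lam^2), which forces u to
   be finite everywhere with quadratic lower bounds at its supergradients.
   Perturbing wstar along single coordinates then yields the KKT conditions,
   and the supergradients of u at the X_k^T wstar, scaled by 1/(n lam), form a
   dual point with zero gap, so D(thstar) = P(wstar).  Since the gap dominates
   lam * sum_i w_i (1 - X_.i^T th), wstar_j vanishes as soon as
   X_.j^T thstar < 1, which the ball and Cauchy-Schwarz guarantee. *)

Section RealFacts.
Variable R : realType.

Lemma le0_le_small_mul (A K delta : R) : 0 < delta -> 0 <= K ->
  (forall s, 0 < s < delta -> A <= s * K) -> A <= 0.
Proof.
move=> delta0 K0 small; rewrite leNgt; apply/negP => A0.
have den0 : 0 < 2 * (A + delta * K) by nra.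
set s := delta * A / (2 * (A + delta * K)).
have s0 : 0 < s by rewrite /s divr_gt0 // mulr_gt0.
have s1 : s < delta by rewrite /s ltr_pdivrMr //; nra.
have : s * K < A by rewrite /s mulrAC ltr_pdivrMr //; nra.
by have := small s ltac:(by rewrite s0 s1); lra.
Qed.

Lemma l2norm_sqr m (v : 'I_m -> R) : l2norm v ^+ 2 = \sum_(i < m) v i ^+ 2.
Proof. by rewrite /l2norm sqr_sqrtr //; apply: sumr_ge0 => i _; apply: sqr_ge0. Qed.

Lemma l2norm_eq0 m (v : 'I_m -> R) : l2norm v = 0 -> forall k, v k = 0.
Proof.
move=> v0 k; have := l2norm_sqr v; rewrite v0 expr0n /= => /esym/psumr_eq0P v20.
by apply/eqP; rewrite -sqrf_eq0; apply/eqP; apply: v20 => // i _; apply: sqr_ge0.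
Qed.

Lemma sum_mul_le_l2norm m (a b : 'I_m -> R) :
  \sum_(k < m) a k * b k <= l2norm a * l2norm b.
Proof.
set A := l2norm a; set B := l2norm b; set P := \sum_(k < m) a k * b k.
have [A0|] := eqVneq A 0.
  by rewrite A0 mul0r /P big1 // => k _; rewrite (l2norm_eq0 A0) mul0r.
have [B0|] := eqVneq B 0.
  by rewrite B0 mulr0 /P big1 // => k _; rewrite (l2norm_eq0 B0) mulr0.
move=> B0 A0.
have Agt0 : 0 < A by rewrite lt0r A0 sqrtr_ge0.
have Bgt0 : 0 < B by rewrite lt0r B0 sqrtr_ge0.
have : 0 <= \sum_(k < m) (B * a k - A * b k) ^+ 2.
  by apply: sumr_ge0 => k _; apply: sqr_ge0.
have -> : \sum_(k < m) (B * a k - A * b k) ^+ 2 =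
    B ^+ 2 * \sum_(k < m) a k ^+ 2 - 2 * (A * B) * P + A ^+ 2 * \sum_(k < m) b k ^+ 2.
  rewrite /P !mulr_sumr -sumrB -big_split /=.
  by apply: eq_bigr => k _; ring.
rewrite -!l2norm_sqr -/A -/B.
have -> : B ^+ 2 * A ^+ 2 - 2 * (A * B) * P + A ^+ 2 * B ^+ 2
    = 2 * (A * B) * (A * B - P) by ring.
by rewrite pmulr_rge0 ?subr_ge0 // mulr_gt0 // mulr_gt0.
Qed.

Lemma strongly_concave_max_dist m alpha (F : ('I_m -> R) -> \bar R)
    (C : set ('I_m -> R)) xs x :
  strongly_concave alpha F ->
  (forall t, 0 < t < 1 -> C (fun i => t * xs i + (1 - t) * x i)) ->
  (forall y, C y -> (F y <= F xs)%E) ->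
  F xs \is a fin_num -> F x \is a fin_num ->
  alpha / 2 * l2norm (fun i => xs i - x i) ^+ 2 <= fine (F xs) - fine (F x).
Proof.
move=> [alpha0 Fsc] Cseg Fmax Fxs Fx.
set N := l2norm _ ^+ 2; set a := fine (F xs); set b := fine (F x).
have N0 : 0 <= alpha / 2 * N by rewrite mulr_ge0 ?sqr_ge0 ?divr_ge0 // ltW.
suff : b - a + alpha / 2 * N <= 0 by lra.
apply: (le0_le_small_mul ltr01 N0) => s /andP[s0 s1].
have t01 : 0 < 1 - s < 1 by apply/andP; split; lra.
have := le_trans (Fsc xs x _ t01) (Fmax _ (Cseg _ t01)).
rewrite -(fineK Fxs) -(fineK Fx) -!EFinM -!EFinD lee_fin -/a -/b -/N => mid_le.
rewrite -subr_le0 -(pmulr_rle0 _ s0).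
have -> : s * (b - a + alpha / 2 * N - s * (alpha / 2 * N))
    = (1 - s) * a + (1 - (1 - s)) * b + alpha / 2 * (1 - s) * (1 - (1 - s)) * N - a.
  by ring.
by rewrite subr_le0.
Qed.

End RealFacts.

Section Utility.
Variables (R : realType) (u : R -> \bar R).
Hypothesis u_utility : utility u.

Local Notation f x := (fine (u x)).
Local Notation fin x := (u x \is a fin_num).

Lemma utility_ltey x : (u x < +oo)%E.
Proof. by case: u_utility. Qed.

Lemma utility_NyVfin x : u x = -oo%E \/ u x = (f x)%:E.
Proof. by move: (utility_ltey x); case: (u x) => [r| |] //= _; [right|left]. Qed.

Lemma utility_le x y : x <= y -> (u x <= u y)%E.
Proof. by case: u_utility => _ _ + _; apply. Qed.

Lemma utility_fin_num_le x y : fin x -> x <= y -> fin y.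
Proof.
move=> fx /utility_le; have := utility_ltey y; move: fx.
by case: (u x) => [a| |] //; case: (u y) => [b| |].
Qed.

Lemma utility_concave a c t : fin a -> fin c -> 0 < t < 1 ->
  t * f a + (1 - t) * f c <= f (t * a + (1 - t) * c).
Proof.
move=> fa fc /andP[t0 t1].
have fm : fin (t * a + (1 - t) * c).
  by case: (leP a c) => ac; [apply: (utility_fin_num_le fa) | apply: (utility_fin_num_le fc)];
    nra.
case: u_utility => _ _ _ /(_ a c t); rewrite t0 t1 => /(_ isT).
by rewrite -(fineK fa) -(fineK fc) -(fineK fm) -!EFinM -EFinD lee_fin.
Qed.

Lemma utility_slope_le y z h : fin y -> y < z -> 0 < h ->
  (f (z + h) - f z) / h <= (f z - f y) / (z - y).
Proof.
move=> fy yz h0; have fzh : fin (z + h) by apply: (utility_fin_num_le fy); lra.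
have D0 : 0 < z + h - y by lra.
set t := h / (z + h - y).
have t01 : 0 < t < 1 by rewrite divr_gt0 //= ltr_pdivrMr // mul1r; lra.
have eh : t * (z + h - y) = h by rewrite /t divfK // gt_eqF.
have := utility_concave fy fzh t01.
have -> : t * y + (1 - t) * (z + h) = z by lra.
move=> conc; rewrite ler_pdivrMr // mulrAC ler_pdivlMr; last lra.
rewrite -{2}eh (_ : z - y = (1 - t) * (z + h - y)); last by lra.
nra.
Qed.

Definition supergrad (z t : R) := forall y, (u y <= (f z + t * (y - z))%:E)%E.

Lemma supergrad_exists y0 z : fin y0 -> y0 < z -> exists t, supergrad z t.
Proof.
move=> fy0 y0z; have fz : fin z by apply: (utility_fin_num_le fy0); lra.
pose S := [set (f (z + h) - f z) / h | h in [set h | 0 < h]].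
have S0 : S !=set0 by exists ((f (z + 1) - f z) / 1), 1 => //=; exact: ltr01.
have Sub y : fin y -> y < z -> ubound S ((f z - f y) / (z - y)).
  by move=> fy yz _ [h h0 <-]; apply: utility_slope_le.
have hS : has_sup S by split => //; exists ((f z - f y0) / (z - y0)); apply: Sub.
exists (sup S) => y; case: (utility_NyVfin y) => uy; first by rewrite uy leNye.
have fy : fin y by rewrite uy.
rewrite uy lee_fin; case: (ltgtP y z) => yz.
- have := ge_sup S0 (Sub y fy yz); rewrite ler_pdivlMr; [nra | lra].
- have : S ((f y - f z) / (y - z)).
    by exists (y - z); [rewrite /= subr_gt0 | rewrite subrKC].
  by move/(sup_upper_bound hS); rewrite ler_pdivrMr; [nra | lra].
- by rewrite yz subrr mulr0 addr0.
Qed.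

Lemma uconj_le t z : (uconj u t <= (t * z)%:E - u z)%E.
Proof. by apply: ereal_inf_lbound; exists z. Qed.

Lemma uconj_ltey t : (uconj u t < +oo)%E.
Proof.
case: u_utility => _ [z uz] _ _; have fz : fin z by rewrite fin_numElt uz utility_ltey.
by apply: le_lt_trans (uconj_le t z) _; rewrite -(fineK fz) -EFinB ltry.
Qed.

Lemma uconj_ge t M : (forall z, (M <= (t * z)%:E - u z)%E) -> (M <= uconj u t)%E.
Proof. by move=> HM; apply: le_ereal_inf_tmp => _ [z _ <-]. Qed.

Lemma uconj_supergrad z t : fin z -> supergrad z t -> uconj u t = (t * z - f z)%:E.
Proof.
move=> fz zt; apply/le_anti/andP; split.
  by have := uconj_le t z; rewrite -(fineK fz) -EFinB.
apply: uconj_ge => y; case: (utility_NyVfin y) => uy; first by rewrite uy leey.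
by have := zt y; rewrite uy -EFinB !lee_fin; lra.
Qed.

Variable mu : R.
Hypothesis mu_gt0 : 0 < mu.
Hypothesis uconj_strongly_concave : forall A B tau,
  uconj u A \is a fin_num -> uconj u B \is a fin_num -> 0 < tau < 1 ->
  ((tau * fine (uconj u A) + (1 - tau) * fine (uconj u B)
     + mu / 2 * tau * (1 - tau) * (A - B) ^+ 2)%:E
   <= uconj u (tau * A + (1 - tau) * B))%E.

Lemma uconj_le_supergrad z t s : fin z -> supergrad z t -> uconj u s \is a fin_num ->
  fine (uconj u s) <= t * z - f z + z * (s - t) - mu / 2 * (s - t) ^+ 2.
Proof.
move=> fz zt fs; have ut := uconj_supergrad fz zt.
have ft : uconj u t \is a fin_num by rewrite ut.
set a := fine (uconj u s); set K := mu / 2 * (s - t) ^+ 2.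
have K0 : 0 <= K by rewrite mulr_ge0 ?sqr_ge0 ?divr_ge0 // ltW.
suff : a - (t * z - f z) - z * (s - t) + K <= 0 by lra.
apply: (le0_le_small_mul ltr01 K0) => tau tau01; have /andP[tau0 _] := tau01.
have := le_trans (uconj_strongly_concave fs ft tau01) (uconj_le _ z).
rewrite ut -(fineK fz) -EFinB lee_fin -/a => sc.
rewrite -subr_le0 -(pmulr_rle0 _ tau0).
have -> : tau * (a - (t * z - f z) - z * (s - t) + K - tau * K) =
    (tau * a + (1 - tau) * (t * z - f z) + mu / 2 * tau * (1 - tau) * (s - t) ^+ 2)
    - ((tau * s + (1 - tau) * t) * z - f z) by rewrite /K; ring.
by rewrite subr_le0.
Qed.

Lemma utility_fin_num x : fin x.
Proof.
(* If x bounded dom u from below, u^* would stay finite at arbitrarily steep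
   slopes s, while strong concavity makes it decrease like -mu/2 s^2. *)
apply/negPn/negP => nfx.
have uNy : u x = -oo%E by case: (utility_NyVfin x) => // ux; rewrite ux in nfx.
have gtx y : fin y -> x < y.
  move=> fy; rewrite ltNge; apply/negP => /utility_le; rewrite uNy leeNy_eq => /eqP uy.
  by rewrite uy in fy.
case: u_utility => _ [z0 uz0] _ _; have fz0 : fin z0 by rewrite fin_numElt uz0 utility_ltey.
have [t zt] := supergrad_exists fz0 (ltr_pwDr ltr01 (lexx z0)).
have fz : fin (z0 + 1) by apply: (utility_fin_num_le fz0); lra.
set z := z0 + 1 in zt fz; have xz : x < z by have := gtx _ fz0; rewrite /z; lra.
set s := t + (2 * (z - x) + 1) / mu.
have smu : mu * (s - t) = 2 * (z - x) + 1 by rewrite /s addrC addKr mulrC divfK // gt_eqF.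
have st : 0 < s - t by rewrite /s addrC addKr divr_gt0 //; lra.
set L := (s - t) * x - f z + t * z.
have Ls : (L%:E <= uconj u s)%E.
  apply: uconj_ge => y; case: (utility_NyVfin y) => uy; first by rewrite uy leey.
  have := zt y; have := gtx y; rewrite uy -EFinB !lee_fin /L => /(_ isT); nra.
have fs : uconj u s \is a fin_num.
  by rewrite fin_numElt uconj_ltey andbT (lt_le_trans (ltNyr L) Ls).
have := uconj_le_supergrad fz zt fs; rewrite -(fineK fs) lee_fin /L in Ls.
nra.
Qed.

Lemma utility_supergrad z : exists t, supergrad z t.
Proof. by apply: (supergrad_exists (utility_fin_num (z - 1))); rewrite ltrBlDr ltrDl. Qed.

Lemma utility_quadratic_lower z z' t : supergrad z t ->
  - (z' - z) ^+ 2 <= mu * (f z' - f z - t * (z' - z)).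
Proof.
move=> zt; have [t' zt'] := utility_supergrad z'.
have fz := utility_fin_num z; have fz' := utility_fin_num z'.
have ut := uconj_supergrad fz zt; have ut' := uconj_supergrad fz' zt'.
have := uconj_le_supergrad fz zt (s := t'); rewrite ut' => /(_ isT) /= conj_t'.
have := uconj_le_supergrad fz' zt' (s := t); rewrite ut => /(_ isT) /= conj_t.
have sup_t' : f z <= f z' + t' * (z - z') by have := zt' z; rewrite -(fineK fz) lee_fin.
set h := z' - z in conj_t' conj_t sup_t' *.
set e := t - t' in conj_t' conj_t sup_t' *.
have ez' : z' = z + h by rewrite /h; ring.
have et' : t' = t - e by rewrite /e; ring.
rewrite ez' et' in conj_t' conj_t sup_t' *.
have cocoercive : mu * e ^+ 2 <= h * e by nra.
have gain_e : - (h * e) <= f (z + h) - f z - t * h by nra.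
have he_le : mu * (h * e) <= h ^+ 2.
  have : mu * (mu * e ^+ 2) <= mu * (h * e) by rewrite ler_pM2l.
  have : 0 <= (h - mu * e) ^+ 2 by apply: sqr_ge0.
  nra.
have : mu * - (h * e) <= mu * (f (z + h) - f z - t * h) by rewrite ler_pM2l.
lra.
Qed.

End Utility.

Section Problem.
Variables (R : realType) (n d : nat) (X : 'M[R]_(n, d)) (u : R -> \bar R) (lam : R).
Hypothesis n_gt0 : (0 < n)%N.
Hypothesis u_utility : utility u.
Hypothesis lam_gt0 : 0 < lam.

Local Notation f x := (fine (u x)).
Local Notation g t := (fine (uconj u t)).
Local Notation nl := (n%:R * lam).

Let nR_gt0 : 0 < n%:R :> R. Proof. by rewrite ltr0n. Qed.
Let nl_gt0 : 0 < nl. Proof. by rewrite mulr_gt0. Qed.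

Lemma Ddual_gtNy_fin (th : 'I_n -> R) : (-oo < Ddual u lam th)%E ->
  forall k, uconj u (nl * th k) \is a fin_num.
Proof.
move=> Dth k; rewrite fin_numElt uconj_ltey // andbT ltNye; apply/eqP => Dk.
have : (\sum_(j < n) uconj u (nl * th j))%E = -oo%E.
  by apply/esum_eqNyP; exists k; split => //; exact: mem_index_enum.
by move: Dth; rewrite /Ddual => + E; rewrite E mulrNy gtr0_sg ?invr_gt0 // mul1e.
Qed.

Lemma DdualE (th : 'I_n -> R) : (forall k, uconj u (nl * th k) \is a fin_num) ->
  Ddual u lam th = ((n%:R)^-1 * \sum_(k < n) g (nl * th k))%:E.
Proof.
move=> fth; rewrite /Ddual; under eq_bigr => k _ do rewrite -(fineK (fth k)).
by rewrite sumEFin -EFinM.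
Qed.

Lemma Pprimal_ltey_fin (w : 'I_d -> R) : (Pprimal X u lam w < +oo)%E ->
  forall k, u (rowdot X w k) \is a fin_num.
Proof.
move=> Pw k; rewrite fin_numElt utility_ltey // andbT ltNye; apply/eqP => uk.
have : (\sum_(j < n) u (rowdot X w j))%E = -oo%E.
  by apply/esum_eqNyP; exists k; split => //; exact: mem_index_enum.
move: Pw; rewrite /Pprimal => + E; rewrite E -EFinN mulrNy ltr0_sg ?oppr_lt0 ?invr_gt0 //.
by rewrite EFinN mulN1e.
Qed.

Lemma PprimalE (w : 'I_d -> R) : (forall k, u (rowdot X w k) \is a fin_num) ->
  Pprimal X u lam w = (- (n%:R)^-1 * \sum_(k < n) f (rowdot X w k) + lam * l1norm w)%:E.
Proof.
move=> fw; rewrite /Pprimal; under eq_bigr => k _ do rewrite -(fineK (fw k)).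
by rewrite sumEFin -EFinN -EFinM -EFinD.
Qed.

Lemma linfnorm_phi_le1 (th : 'I_n -> R) : linfnorm (fun i => phi (coldot X th i)) <= 1 <->
  forall i, coldot X th i <= 1.
Proof.
have phiE i : `|phi (coldot X th i)| = phi (coldot X th i).
  by rewrite ger0_norm // le_max lexx orbT.
rewrite /linfnorm; split => [/bigmax_leP[_ le1] i | le1].
  by have := le1 i isT; rewrite phiE ge_max => /andP[].
by apply/bigmax_leP; split => // i _; rewrite phiE ge_max le1 ler01.
Qed.

Lemma sum_mul_rowdot (a : 'I_n -> R) (w : 'I_d -> R) :
  \sum_(k < n) a k * rowdot X w k = \sum_(j < d) w j * coldot X a j.
Proof.
rewrite /rowdot /coldot; under eq_bigr => k _ do rewrite mulr_sumr.
rewrite exchange_big /=; apply: eq_bigr => j _; rewrite mulr_sumr.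
by apply: eq_bigr => k _; ring.
Qed.

Lemma l1norm_ge0E (w : 'I_d -> R) : (forall i, 0 <= w i) -> l1norm w = \sum_(i < d) w i.
Proof. by move=> w0; apply: eq_bigr => i _; rewrite ger0_norm. Qed.

Lemma Gap_ge (w : 'I_d -> R) (th : 'I_n -> R) : CP X u lam w -> CD X u lam th ->
  ((lam * \sum_(i < d) w i * (1 - coldot X th i))%:E <= Gap X u lam w th)%E.
Proof.
move=> [Pw w0] [Dth /linfnorm_phi_le1 _].
have fw := Pprimal_ltey_fin Pw; have fth := Ddual_gtNy_fin Dth.
rewrite /Gap PprimalE // DdualE // -EFinB lee_fin l1norm_ge0E //.
set S := \sum_(k < n) th k * rowdot X w k.
have -> : \sum_(i < d) w i * (1 - coldot X th i) = \sum_(i < d) w i - S.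
  by rewrite /S sum_mul_rowdot -sumrB; apply: eq_bigr => i _; ring.
have fenchel_young : \sum_(k < n) f (rowdot X w k) + \sum_(k < n) g (nl * th k) <= nl * S.
  rewrite -big_split /= /S mulr_sumr; apply: ler_sum => k _.
  suff : g (nl * th k) <= nl * th k * rowdot X w k - f (rowdot X w k) by lra.
  have := uconj_le u (nl * th k) (rowdot X w k).
  by rewrite -(fineK (fth k)) -(fineK (fw k)) -EFinB lee_fin.
have : (n%:R)^-1 * (\sum_(k < n) f (rowdot X w k) + \sum_(k < n) g (nl * th k)) <= lam * S.
  by rewrite ler_pdivrMl // mulrA.
lra.
Qed.

Lemma Ddual_le_Pprimal (w : 'I_d -> R) (th : 'I_n -> R) :
  CP X u lam w -> CD X u lam th -> (Ddual u lam th <= Pprimal X u lam w)%E.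
Proof.
move=> CPw CDth; have gap := Gap_ge CPw CDth.
case: CPw CDth => [_ w0] [Dth /linfnorm_phi_le1 th1].
have Dfin : Ddual u lam th \is a fin_num by rewrite DdualE //; exact: Ddual_gtNy_fin.
rewrite -sube_ge0 ?Dfin //; apply: le_trans gap.
by rewrite lee_fin mulr_ge0 ?sumr_ge0 // ?ltW // => i _; rewrite mulr_ge0 ?subr_ge0.
Qed.

Lemma coldot_convex (x y : 'I_n -> R) t j :
  coldot X (fun i => t * x i + (1 - t) * y i) j = t * coldot X x j + (1 - t) * coldot X y j.
Proof. by rewrite /coldot !mulr_sumr -big_split /=; apply: eq_bigr => k _; ring. Qed.

Lemma CD_convex alpha (x y : 'I_n -> R) t :
  strongly_concave alpha (@Ddual R n u lam) -> CD X u lam x -> CD X u lam y -> 0 < t < 1 ->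
  CD X u lam (fun i => t * x i + (1 - t) * y i).
Proof.
move=> [_ Dsc] [Dx /linfnorm_phi_le1 x1] [Dy /linfnorm_phi_le1 y1] t01.
split; last first.
  apply/linfnorm_phi_le1 => i; rewrite coldot_convex.
  by have := x1 i; have := y1 i; case/andP: t01 => t0 t1; nra.
apply: lt_le_trans (Dsc x y t t01).
rewrite !DdualE; [by rewrite -!EFinM -!EFinD ltNyr | exact: Ddual_gtNy_fin ..].
Qed.

Lemma dual_ball alpha (ts th : 'I_n -> R) (w : 'I_d -> R) :
  strongly_concave alpha (@Ddual R n u lam) -> CD X u lam ts ->
  (forall th', CD X u lam th' -> (Ddual u lam th' <= Ddual u lam ts)%E) ->
  CP X u lam w -> CD X u lam th ->
  l2norm (fun k => ts k - th k) <= Num.sqrt (2 * fine (Gap X u lam w th) / alpha).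
Proof.
move=> Dsc CDts ts_max CPw CDth; have alpha0 : 0 < alpha by case: Dsc.
have Dfin (y : 'I_n -> R) : CD X u lam y -> Ddual u lam y \is a fin_num.
  by case=> /Ddual_gtNy_fin fy _; rewrite DdualE.
have Pw : Pprimal X u lam w \is a fin_num.
  by case: CPw => /Pprimal_ltey_fin fw _; rewrite PprimalE.
have strong := strongly_concave_max_dist Dsc (fun t => CD_convex Dsc CDts CDth) ts_max
  (Dfin _ CDts) (Dfin _ CDth).
have weak : fine (Ddual u lam ts) <= fine (Pprimal X u lam w).
  by apply: fine_le; [exact: Dfin | exact: Pw | exact: Ddual_le_Pprimal].
rewrite /Gap fineB ?Dfin // -[l2norm _]ger0_norm ?sqrtr_ge0 // -sqrtr_sqr.
by apply: ler_wsqrtr; rewrite ler_pdivlMr //; lra.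
Qed.

Lemma coldot_le_dist (ts th : 'I_n -> R) j :
  coldot X ts j <= coldot X th j + colnorm X j * l2norm (fun k => ts k - th k).
Proof.
rewrite -lerBlDl (_ : _ - _ = \sum_(k < n) X k j * (ts k - th k)).
  exact: sum_mul_le_l2norm.
by rewrite /coldot -sumrB; apply: eq_bigr => k _; ring.
Qed.

Lemma screening (ws : 'I_d -> R) (ts : 'I_n -> R) j :
  CP X u lam ws -> CD X u lam ts -> Ddual u lam ts = Pprimal X u lam ws ->
  coldot X ts j < 1 -> ws j = 0.
Proof.
move=> CPws CDts zero_gap tsj; have := Gap_ge CPws CDts.
case: CPws CDts => [Pws ws0] [_ /linfnorm_phi_le1 ts1].
rewrite /Gap zero_gap subee ?PprimalE ?lee_fin ?pmulr_rle0 //; last exact: Pprimal_ltey_fin.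
rewrite (bigD1 j) //= => sum_le0.
have : ws j * (1 - coldot X ts j) <= 0.
  apply: le_trans sum_le0; rewrite lerDl sumr_ge0 // => i _.
  by rewrite mulr_ge0 ?subr_ge0.
rewrite pmulr_lle0 ?subr_gt0 // => wsj; exact/le_anti/andP.
Qed.

Lemma uconj_strongly_concave alpha (b : 'I_n -> R) :
  strongly_concave alpha (@Ddual R n u lam) ->
  (forall k, uconj u (nl * b k) \is a fin_num) ->
  forall A B tau, uconj u A \is a fin_num -> uconj u B \is a fin_num -> 0 < tau < 1 ->
  ((tau * g A + (1 - tau) * g B
     + alpha / (n%:R * lam ^+ 2) / 2 * tau * (1 - tau) * (A - B) ^+ 2)%:E
   <= uconj u (tau * A + (1 - tau) * B))%E.
Proof.
move=> [_ Dsc] fb A B tau fA fB tau01.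
have nl_neq0 : nl != 0 by rewrite gt_eqF.
(* Vary a single coordinate of the dual point b, where every term is finite. *)
pose k := Ordinal n_gt0.
pose upd a (i : 'I_n) := if i == k then a / nl else b i.
set S := \sum_(i < n | i != k) g (nl * b i).
have Dupd a : Ddual u lam (upd a) = (((n%:R)^-1)%:E * (uconj u a + S%:E))%E.
  rewrite /Ddual (bigD1 k) //= /upd eqxx mulrC divfK //; congr (_ * (_ + _))%E.
  by rewrite /S -sumEFin; apply: eq_bigr => i ik; rewrite (negbTE ik) fineK.
have mid : (fun i => tau * upd A i + (1 - tau) * upd B i) = upd (tau * A + (1 - tau) * B).
  by apply/funext => i; rewrite /upd; case: (i == k); ring.
have dist : l2norm (fun i => upd A i - upd B i) ^+ 2 = ((A - B) / nl) ^+ 2.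
  rewrite l2norm_sqr (bigD1 k) //= big1 ?addr0 => [|i ik].
    by rewrite /upd eqxx mulrBl.
  by rewrite /upd (negbTE ik) subrr expr0n.
have := Dsc (upd A) (upd B) tau tau01.
rewrite mid !Dupd dist -(fineK fA) -(fineK fB) /= -!EFinD.
case: (uconj u (tau * A + (1 - tau) * B)) (uconj_ltey u_utility (tau * A + (1 - tau) * B))
  => [r| |] // _; last by rewrite mulrNy gtr0_sg ?invr_gt0 // mul1e leeNy_eq.
rewrite -EFinD -EFinM !lee_fin -(ler_pM2l nR_gt0).
have n_neq0 : n%:R != 0 :> R by rewrite gt_eqF.
rewrite mulVKf // (_ : n%:R * _ = tau * g A + (1 - tau) * g B
    + alpha / (n%:R * lam ^+ 2) / 2 * tau * (1 - tau) * (A - B) ^+ 2 + S).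
  by rewrite lerD2r.
by field; rewrite n_neq0 gt_eqF.
Qed.

Lemma rowdot_add_delta (w : 'I_d -> R) s j k :
  rowdot X (fun i => w i + s * (i == j)%:R) k = rowdot X w k + s * X k j.
Proof.
rewrite /rowdot; under eq_bigr do rewrite mulrDr; rewrite big_split /=; congr (_ + _).
rewrite (bigD1 j) //= eqxx mulr1 big1 ?addr0 1?mulrC // => i ij.
by rewrite (negbTE ij) !mulr0.
Qed.

Lemma l1norm_add_delta (w : 'I_d -> R) s j : (forall i, 0 <= w i) -> 0 <= w j + s ->
  l1norm (fun i => w i + s * (i == j)%:R) = l1norm w + s.
Proof.
move=> w0 wsj; rewrite !l1norm_ge0E // => [|i]; last first.
  by case: (eqVneq i j) => [->|_]; rewrite ?mulr1 // mulr0 addr0.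
rewrite big_split /=; congr (_ + _); rewrite (bigD1 j) //= eqxx mulr1 big1 ?addr0 // => i ij.
by rewrite (negbTE ij) mulr0.
Qed.

Section SmoothUtility.
Variable mu : R.
Hypothesis mu_gt0 : 0 < mu.
Hypothesis u_fin : forall z, u z \is a fin_num.
Hypothesis u_smooth : forall z z' t, supergrad u z t ->
  - (z' - z) ^+ 2 <= mu * (f z' - f z - t * (z' - z)).

Variables (ws : 'I_d -> R) (t : 'I_n -> R).
Hypothesis ws_feasible : CP X u lam ws.
Hypothesis ws_min : forall w, CP X u lam w -> (Pprimal X u lam ws <= Pprimal X u lam w)%E.
Hypothesis t_supergrad : forall k, supergrad u (rowdot X ws k) (t k).

Lemma primal_min_perturb j s : 0 <= ws j + s ->
  s * (mu * coldot X t j) - s ^+ 2 * \sum_(k < n) X k j ^+ 2 <= mu * nl * s.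
Proof.
move=> wsj; have [_ ws0] := ws_feasible.
set z := rowdot X ws; set w' := fun i => ws i + s * (i == j)%:R.
have CPw' : CP X u lam w'.
  split => [|i]; first by rewrite PprimalE // ltry.
  by rewrite /w'; case: (eqVneq i j) => [->|_]; rewrite ?mulr1 // mulr0 addr0.
have := ws_min CPw'; rewrite !PprimalE // lee_fin l1norm_add_delta //.
have -> : \sum_(k < n) f (rowdot X w' k) = \sum_(k < n) f (z k + s * X k j).
  by apply: eq_bigr => k _; rewrite rowdot_add_delta.
set S1 := \sum_(k < n) f (z k + s * X k j); set S0 := \sum_(k < n) f (z k) => opt.
have gain : S1 - S0 <= nl * s.
  by rewrite -mulrA -ler_pdivrMl // mulrBr; lra.
have : \sum_(k < n) - (s * X k j) ^+ 2 <=
    \sum_(k < n) mu * (f (z k + s * X k j) - f (z k) - t k * (s * X k j)).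
  apply: ler_sum => k _; have := u_smooth (z k + s * X k j) (t_supergrad k).
  by rewrite addrC addKr.
rewrite -mulr_sumr !big_split /= !sumrN -/S1 -/S0.
have -> : \sum_(k < n) (s * X k j) ^+ 2 = s ^+ 2 * \sum_(k < n) X k j ^+ 2.
  by rewrite mulr_sumr; apply: eq_bigr => k _; rewrite exprMn.
have -> : \sum_(k < n) t k * (s * X k j) = s * coldot X t j.
  by rewrite /coldot mulr_sumr; apply: eq_bigr => k _; ring.
have : mu * (S1 - S0) <= mu * (nl * s) by rewrite ler_pM2l.
lra.
Qed.

Lemma primal_min_coldot j : coldot X t j <= nl /\ (0 < ws j -> coldot X t j = nl).
Proof.
have [_ ws0] := ws_feasible.
have Q0 : 0 <= \sum_(k < n) X k j ^+ 2 by apply: sumr_ge0 => k _; apply: sqr_ge0.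
have le_nl : coldot X t j <= nl.
  rewrite -subr_le0 -(pmulr_rle0 _ mu_gt0).
  apply: (le0_le_small_mul ltr01 Q0) => s /andP[s0 _].
  have := @primal_min_perturb j s; rewrite (addr_ge0 (ws0 j) (ltW s0)) => /(_ isT).
  nra.
split=> // wsj; apply/le_anti; rewrite le_nl -subr_le0 -(pmulr_rle0 _ mu_gt0) /=.
apply: (le0_le_small_mul wsj Q0) => s /andP[s0 s1].
have := @primal_min_perturb j (- s); rewrite subr_ge0 ltW // => /(_ isT).
nra.
Qed.

Lemma dual_certificate :
  CD X u lam (fun k => t k / nl) /\ Ddual u lam (fun k => t k / nl) = Pprimal X u lam ws.
Proof.
have [_ ws0] := ws_feasible; set z := rowdot X ws.
have conjE k : uconj u (nl * (t k / nl)) = (t k * z k - f (z k))%:E.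
  by rewrite mulrC divfK ?gt_eqF // (uconj_supergrad u_utility (u_fin _) (t_supergrad k)).
have fth k : uconj u (nl * (t k / nl)) \is a fin_num by rewrite conjE.
split.
  split; first by rewrite DdualE // ltNyr.
  apply/linfnorm_phi_le1 => i.
  rewrite (_ : coldot _ _ _ = coldot X t i / nl); last first.
    by rewrite /coldot mulr_suml; apply: eq_bigr => k _; rewrite mulrA.
  by rewrite ler_pdivrMr // mul1r; case: (primal_min_coldot i).
rewrite DdualE // PprimalE; last by move=> k; apply: u_fin.
under eq_bigr do rewrite conjE /=.
rewrite big_split /= sumrN.
have -> : \sum_(k < n) t k * z k = nl * l1norm ws.
  rewrite sum_mul_rowdot l1norm_ge0E // mulr_sumr; apply: eq_bigr => i _.
  have := ws0 i; rewrite le_eqVlt => /orP[/eqP <-|/(primal_min_coldot i).2 ->].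
    by rewrite !mul0r mulr0.
  by rewrite mulrC.
by congr (_%:E); field; rewrite gt_eqF.
Qed.

End SmoothUtility.

Lemma strong_duality alpha (ws : 'I_d -> R) (ts : 'I_n -> R) :
  strongly_concave alpha (@Ddual R n u lam) ->
  CP X u lam ws -> (forall w, CP X u lam w -> (Pprimal X u lam ws <= Pprimal X u lam w)%E) ->
  CD X u lam ts -> (forall th, CD X u lam th -> (Ddual u lam th <= Ddual u lam ts)%E) ->
  Ddual u lam ts = Pprimal X u lam ws.
Proof.
move=> Dsc CPws ws_min CDts ts_max; have [alpha0 _] := Dsc.
have mu_gt0 : 0 < alpha / (n%:R * lam ^+ 2) by rewrite divr_gt0 // mulr_gt0 // exprn_gt0.
have uconj_sc := uconj_strongly_concave Dsc (Ddual_gtNy_fin CDts.1).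
have [t t_sg] := choice (fun k => utility_supergrad u_utility mu_gt0 uconj_sc (rowdot X ws k)).
have [CDth Dth] := dual_certificate mu_gt0 (utility_fin_num u_utility mu_gt0 uconj_sc)
  (utility_quadratic_lower u_utility mu_gt0 uconj_sc) CPws ws_min t_sg.
by apply/le_anti; rewrite Ddual_le_Pprimal //= -Dth ts_max.
Qed.

End Problem.

Theorem theorem4 (R : realType) (n d : nat) (X : 'M[R]_(n, d))
  (u : R -> \bar R) (lam alpha : R)
  (wstar : 'I_d -> R) (thstar : 'I_n -> R) :
  (0 < n)%N ->
  utility u ->
  0 < lam ->
  CP X u lam wstar ->
  (forall w, CP X u lam w -> (Pprimal X u lam wstar <= Pprimal X u lam w)%E) ->
  CD X u lam thstar ->
  (forall th, CD X u lam th -> (Ddual u lam th <= Ddual u lam thstar)%E) ->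
  strongly_concave alpha (@Ddual R n u lam) ->
  forall (w : 'I_d -> R) (th : 'I_n -> R),
    CP X u lam w -> CD X u lam th ->
    let r := Num.sqrt (2 * fine (Gap X u lam w th) / alpha) in
    cball th r thstar /\
    (forall j : 'I_d, phi (coldot X th j) + r * colnorm X j < 1 -> wstar j = 0).
Proof.
move=> n_gt0 u_utility lam_gt0 CPws ws_min CDts ts_max Dsc w th CPw CDth r.
have ball := dual_ball n_gt0 u_utility lam_gt0 Dsc CDts ts_max CPw CDth; rewrite -/r in ball.
have zero_gap := strong_duality n_gt0 u_utility lam_gt0 Dsc CPws ws_min CDts ts_max.
split=> // j safe_j; apply: (screening n_gt0 u_utility lam_gt0 CPws CDts zero_gap).
have := coldot_le_dist X thstar th j.
have : coldot X th j <= phi (coldot X th j) by rewrite le_max lexx.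
have : colnorm X j * l2norm (fun k => thstar k - th k) <= colnorm X j * r.
  by rewrite ler_wpM2l ?sqrtr_ge0.
lra.
Qed.
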